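(* Let $\Gamma$ be a rooted Eisenbud–Neumann diagram and $v_i$ a node which is not the root, has no node beyond it, and supports exactly one arrowhead $L_i$ (with near weight $\beta_{i1}$ and multiplicity $n_i$), all other neighbours of $v_i$ except the one towards the root being leaves, attached by edges with near weights $\beta_{i2},\dots,\beta_{ik_i}$. Let $\Gamma'$ (the collapse) be obtained by replacing $v_i$, $L_i$ and these leaves by a single arrowhead $L_i'$ at the end of the edge from the parent, with multiplicity $\beta n_i$, $\beta=\beta_{i2}\cdots\beta_{ik_i}$, all other weights and multiplicities unchanged. Then the linking matrix of $\Gamma$ in the basis $L_1,\dots,L_i,\dots,L_\nu$ equals the linking matrix of $\Gamma'$ in the basis $L_1,\dots,\beta L_i',\dots,L_\nu$ (so the two linking matrices are congruent over $\mathbb Q$). Moreover, if $\Gamma$ satisfies conditions (a) all near weights positive and no far weight zero, (b) negativity of a far weight at $v$ forces negativity of far weights at all nodes beyond $v$, (c) all vertex multiplicities positive, then so does $\Gamma'$.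
   Context: A rooted Eisenbud–Neumann (splice) diagram is a finite tree with a distinguished root vertex, whose vertices are nodes, leaves (valency one, not arrowheads) and arrowhead vertices $L_1,\dots,L_\nu$ carrying multiplicities $n_1,\dots,n_\nu$; at each node every incident edge carries a weight at that node (omitted weights equal $1$). At a node $v$, the weight on the edge leading from $v$ towards the root is the far weight at $v$; the weights at $v$ on the other incident edges are near weights at $v$. A node $w$ is beyond a node $v$ if the geodesic from $w$ to the root contains $v$. For distinct vertices $v,w$, $\mathrm{lk}(v,w)$ is the product of all edge weights adjacent to but not on the geodesic between $v$ and $w$. The multiplicity of a non-arrowhead vertex $v$ is $M_v=\sum_j n_j\,\mathrm{lk}(v,L_j)$. The linking matrix is $(\mathrm{lk}(L_i,L_j))$ with self-linking defined by $\mathrm{lk}(L_i,\sum_jn_jL_j)=0$; linking extends bilinearly to rational combinations of arrowheads. *)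

From HB Require Import structures.
From mathcomp Require Import all_boot all_order all_algebra.
Set Implicit Arguments. Unset Strict Implicit. Unset Printing Implicit Defensive.
Import Order.TTheory GRing.Theory Num.Theory.
Local Open Scope ring_scope.

(* A rooted Eisenbud--Neumann diagram whose vertices are taken from a finite
   type T.  [vert] is the vertex set, [par v] is the neighbour of v towards the
   root ([par root = root]); the edges are the pairs {v, par v}.
   [arrow v] marks arrowhead vertices, [mult a] is the multiplicity n_a of an
   arrowhead a, and [wt v w] is the weight at the node v on the edge vw. *)
Record diagram (T : finType) := Diagram {
  vert : {set T};
  droot : T;
  par : T -> T;
  arrow : T -> bool;
  wt : T -> T -> int;
  mult : T -> int
}.

Section Defs.
Variables (T : finType) (D : diagram T).

Definition nbr (v w : T) : bool :=
  [&& v \in vert D, w \in vert D, v != w & (par D v == w) || (par D w == v)].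

Definition valency (v : T) : nat := #|[set x | nbr v x]|.

Definition arrowv (v : T) : bool := (v \in vert D) && arrow D v.

Definition leaf (v : T) : bool :=
  [&& v \in vert D, ~~ arrow D v & valency v == 1%N].

Definition node (v : T) : bool :=
  [&& v \in vert D, ~~ arrow D v & valency v != 1%N].

Definition anc (v : T) : {set T} :=
  [set u | [exists k : 'I_#|T|.+1, iter k (par D) v == u]].

(* u lies on the geodesic between v and w *)
Definition onpath (v w u : T) : bool :=
  (u \in anc v :|: anc w) &&
  ~~ [exists x in anc v :&: anc w, (x != u) && (u \in anc x)].

(* lk(v,w): product of the edge weights adjacent to, but not on, the geodesic
   between v and w (weights sit at nodes). *)
Definition lk (v w : T) : int :=
  \prod_(u | node u && onpath v w u)
     \prod_(x | nbr u x && ~~ onpath v w x) wt D u x.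

Definition Mv (v : T) : int := \sum_(j | arrowv j) mult D j * lk v j.

Definition vmult (v : T) : int := if arrow D v then mult D v else Mv v.

(* linking matrix entries (rational), self-linking defined by
   lk(L_a, sum_j n_j L_j) = 0 *)
Definition lkm (a b : T) : rat :=
  if a != b then (lk a b)%:~R
  else - (\sum_(j | arrowv j && (j != a)) ((mult D j * lk a j)%:~R : rat))
         / (mult D a)%:~R.

Definition wf : Prop :=
  [/\ droot D \in vert D, par D (droot D) = droot D,
      (forall v, v \in vert D -> par D v \in vert D),
      (forall v, v \in vert D -> droot D \in anc v) &
      (forall v, arrowv v -> valency v = 1%N)].

Definition condA : Prop :=
  forall v, node v ->
    (forall x, nbr v x -> x != par D v -> 0 < wt D v x) /\
    (v != droot D -> wt D v (par D v) != 0).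

Definition condB : Prop :=
  forall v w, node v -> node w -> v != droot D -> v \in anc w ->
    wt D v (par D v) < 0 -> wt D w (par D w) < 0.

Definition condC : Prop := forall v, v \in vert D -> 0 < vmult v.

End Defs.

Definition beta (T : finType) (D : diagram T) (vi Li : T) : int :=
  \prod_(x | nbr D vi x && (x != par D vi) && (x != Li)) wt D vi x.

(* The collapse: remove L_i and the leaves at vi; vi itself becomes the new
   arrowhead L_i' (attached to the parent of vi) with multiplicity beta * n_i.
   Everything else is unchanged. *)
Definition collapse (T : finType) (D : diagram T) (vi Li : T) : diagram T :=
  Diagram (vert D :\: [set x | (par D x == vi) && (x != vi)])
          (droot D) (par D)
          (fun x => arrow D x || (x == vi))
          (wt D)
          (fun x => if x == vi then beta D vi Li * mult D Li else mult D x).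

From HB Require Import structures.
From mathcomp Require Import all_boot all_order all_algebra.
Set Implicit Arguments. Unset Strict Implicit. Unset Printing Implicit Defensive.
Import Order.TTheory GRing.Theory Num.Theory.
Local Open Scope ring_scope.

(* Only the node v_i disappears in the collapse, and the children of v_i other
   than L_i are leaves, so no geodesic between two surviving vertices passes
   through v_i: all linking numbers among them are unchanged.  A geodesic from
   L_i to another arrowhead b does pass through v_i, and the weights at v_i off
   it are exactly the leaf weights, whose product is beta; everywhere else L_i
   and L_i' = v_i sit at the same place.  Hence lk(L_i, b) = beta lk'(L_i', b),
   and n_i lk(v, L_i) = (beta n_i) lk'(v, L_i'), which gives the matrix
   identity (self-linking included) and shows that vertex multiplicities, hence
   conditions (a)-(c), survive the collapse. *)

Lemma div_scale_sqr (F : fieldType) (c s y : F) :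
  - (c * s) / y = c * c * (- s / (c * y)).
Proof.
have [->|c0] := eqVneq c 0; first by rewrite !mul0r oppr0 mul0r.
rewrite invfM !mulNr mulrN; congr (- _).
by rewrite (mulrCA s) !mulrA -(mulrA c c) mulfV // mulr1.
Qed.

Section RootedTree.
Variables (T : finType) (G : diagram T).

Lemma onpathC v w u : onpath G v w u = onpath G w v u.
Proof. by rewrite /onpath setUC setIC. Qed.

Lemma lkC v w : lk G v w = lk G w v.
Proof.
rewrite /lk; apply: eq_big => [u|u _]; first by rewrite onpathC.
by apply: eq_bigl => x; rewrite onpathC.
Qed.

Lemma valency1_nbr_uniq x a b :
  valency G x = 1%N -> nbr G x a -> nbr G x b -> a = b.
Proof.
move=> /eqP /cards1P [y Hy] Ha Hb.
have : a \in [set y0 | nbr G x y0] by rewrite inE.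
have : b \in [set y0 | nbr G x y0] by rewrite inE.
by rewrite Hy !inE => /eqP -> /eqP ->.
Qed.

Definition ancestor v u := exists n, iter n (par G) v = u.

Lemma ancestor_trans v u w : ancestor v u -> ancestor u w -> ancestor v w.
Proof. by case=> n <- [m <-]; exists (m + n)%N; rewrite iterD. Qed.

Hypothesis Gwf : wf G.

Lemma par_vert v : v \in vert G -> par G v \in vert G.
Proof. by case: Gwf => _ _ H _ _; apply: H. Qed.

Lemma iter_par_vert n v : v \in vert G -> iter n (par G) v \in vert G.
Proof. by move=> Hv; elim: n => [|n IH] //=; apply: par_vert. Qed.

Lemma ancestor_vert v u : v \in vert G -> ancestor v u -> u \in vert G.
Proof. by move=> Hv [n <-]; apply: iter_par_vert. Qed.

Lemma iter_par_root n : iter n (par G) (droot G) = droot G.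
Proof. by case: Gwf => _ Hr _ _ _; elim: n => [|n IH] //=; rewrite IH Hr. Qed.

Lemma iter_par_to_root v : v \in vert G ->
  exists2 j, (j <= #|T|)%N & iter j (par G) v = droot G.
Proof.
move=> Hv; case: Gwf => _ _ _ H _; move: (H v Hv); rewrite inE.
by case/existsP => k /eqP Hk; exists k => //; rewrite -ltnS.
Qed.

Lemma ancP v u : v \in vert G -> (u \in anc G v) <-> ancestor v u.
Proof.
move=> Hv; rewrite inE; split; first by case/existsP => k /eqP <-; exists k.
case=> n <-; have [Hn|Hn] := leqP n #|T|.
  by apply/existsP; exists (Ordinal (n:=#|T|.+1) (m:=n) Hn); rewrite eqxx.
(* past #|T| steps the iteration has reached the root and stays there *)
have [j Hj Hjr] := iter_par_to_root Hv.
apply/existsP; exists (Ordinal (n:=#|T|.+1) (m:=j) Hj) => /=.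
have -> : n = (n - j + j)%N by rewrite subnK // (leq_trans Hj) // ltnW.
by rewrite iterD Hjr iter_par_root eqxx.
Qed.

Lemma periodic_root v t :
  v \in vert G -> (0 < t)%N -> iter t (par G) v = v -> v = droot G.
Proof.
move=> Hv Ht Hc.
have Hm N : iter (N * t) (par G) v = v by elim: N => [|N IH] //=; rewrite mulSn iterD IH Hc.
have [j _ Hj] := iter_par_to_root Hv.
have Hle : (j <= j * t)%N by rewrite leq_pmulr.
by rewrite -(Hm j) -(subnK Hle) iterD Hj iter_par_root.
Qed.

Lemma ancestor_antisym v u :
  v \in vert G -> ancestor v u -> ancestor u v -> u = v.
Proof.
move=> Hv [k Hk] [m Hm]; have [|Hmk] := posnP (m + k).
  by move/eqP; rewrite addn_eq0 => /andP[_ /eqP k0]; rewrite -Hk k0.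
have Hc : iter (m + k) (par G) v = v by rewrite iterD Hk Hm.
by rewrite -Hk (periodic_root Hv Hmk Hc) iter_par_root.
Qed.

End RootedTree.

Section Collapse.
Variables (T : finType) (G : diagram T) (vi Li : T).
Hypotheses (Gwf : wf G) (vi_node : node G vi) (vi_nroot : vi != droot G)
  (Li_arrow : arrowv G Li) (vi_Li : nbr G vi Li) (Li_npar : Li != par G vi)
  (Li_uniq : forall a, arrowv G a -> nbr G vi a -> a = Li)
  (vi_leaves : forall x, nbr G vi x -> x != par G vi -> x != Li -> leaf G x).

Local Notation G' := (collapse G vi Li).
Local Notation p := (par G vi).

Lemma vi_vert : vi \in vert G.
Proof. by case/and3P: vi_node. Qed.

Lemma Li_vert : Li \in vert G.
Proof. by case/andP: Li_arrow. Qed.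

Lemma arrow_vi : arrow G vi = false.
Proof. by case/and3P: vi_node => _ /negbTE. Qed.

Lemma par_Li : par G Li = vi.
Proof.
case/and4P: vi_Li => _ _ _ /orP[/eqP H|/eqP //].
by move: Li_npar; rewrite H eqxx.
Qed.

Lemma Li_neq_vi : Li != vi.
Proof. by case/and4P: vi_Li => _ _; rewrite eq_sym. Qed.

Lemma ancestor_Li_vi : ancestor G Li vi.
Proof. by exists 1%N; rewrite /= par_Li. Qed.

Lemma par_vi_neq_vi : p != vi.
Proof.
apply: contra vi_nroot => /eqP Hp; apply/eqP.
exact: (periodic_root Gwf vi_vert (t:=1)).
Qed.

Lemma par2_vi_neq_vi : par G p != vi.
Proof.
apply: contra par_vi_neq_vi => /eqP Hpp; apply/eqP.
by apply: (ancestor_antisym Gwf vi_vert); exists 1%N.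
Qed.

Lemma child_valency1 x :
  x \in vert G -> x != vi -> par G x = vi -> valency G x = 1%N.
Proof.
move=> Hx Hxv Hpx.
have Hn : nbr G vi x by rewrite /nbr vi_vert Hx eq_sym Hxv Hpx eqxx orbT.
have Hxp : x != p by apply: contra par2_vi_neq_vi => /eqP <-; rewrite Hpx.
have [->|HxL] := eqVneq x Li; first by case: Gwf => _ _ _ _; apply.
by case/and3P: (vi_leaves Hn Hxp HxL) => _ _ /eqP.
Qed.

Lemma child_childless x y : x \in vert G -> x != vi -> par G x = vi ->
  y \in vert G -> y != x -> par G y = x -> False.
Proof.
move=> Hx Hxv Hpx Hy Hyx Hpy.
have H1 : nbr G x vi by rewrite /nbr Hx vi_vert Hxv Hpx eqxx.
have H2 : nbr G x y by rewrite /nbr Hx Hy eq_sym Hyx Hpy eqxx orbT.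
have Hyv := valency1_nbr_uniq (child_valency1 Hx Hxv Hpx) H1 H2.
by move/negP: par2_vi_neq_vi; apply; rewrite {1}Hyv Hpy Hpx.
Qed.

Lemma descendant_vi n v :
  v \in vert G -> iter n (par G) v = vi -> v = vi \/ par G v = vi.
Proof.
elim: n v => [|n IH] v Hv; first by move=> /= ->; left.
rewrite iterSr => Hi; case: (IH _ (par_vert Gwf Hv) Hi) => H; first by right.
exfalso; set c := par G v in H.
have Hcv : c != vi by apply: contra par_vi_neq_vi => /eqP Hcv; rewrite -{1}Hcv H.
apply: (child_childless (par_vert Gwf Hv) Hcv H Hv _ erefl).
by apply: contra Hcv => /eqP Hvc; rewrite -H /c -!Hvc.
Qed.

Lemma vert_collapse x :
  (x \in vert G') = (x \in vert G) && ~~ ((par G x == vi) && (x != vi)).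
Proof. by rewrite /= !inE andbC. Qed.

Lemma vert_collapse_vert x : x \in vert G' -> x \in vert G.
Proof. by rewrite vert_collapse => /andP[]. Qed.

Lemma vi_vert_collapse : vi \in vert G'.
Proof. by rewrite vert_collapse vi_vert eqxx andbF. Qed.

Lemma Li_vert_collapse : (Li \in vert G') = false.
Proof. by rewrite vert_collapse par_Li eqxx Li_neq_vi andbF. Qed.

Lemma collapse_nancestor_vi x :
  x \in vert G' -> x != vi -> ~ ancestor G x vi.
Proof.
rewrite vert_collapse => /andP[Hx Hn] Hxv [n Hi].
case: (descendant_vi Hx Hi) => H; first by rewrite H eqxx in Hxv.
by rewrite H eqxx Hxv in Hn.
Qed.

Lemma nbr_collapse u x :
  nbr G' u x = [&& nbr G u x, u \in vert G' & x \in vert G'].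
Proof.
rewrite /nbr /=.
case Hu: (u \in _ :\: _); case Hx: (x \in _ :\: _); rewrite ?andbF ?andbT //=.
by move: Hu Hx; rewrite !inE => /andP[_ ->] /andP[_ ->].
Qed.

Lemma nbr_vert_collapse u x :
  u \in vert G' -> u != vi -> nbr G u x -> x \in vert G'.
Proof.
move=> Hu Huv /and4P[_ Hx Hux Hp]; rewrite vert_collapse Hx /=.
apply/negP => /andP[/eqP Hpx Hxv]; case/orP: Hp => /eqP Hp.
  exact: (child_childless Hx Hxv Hpx (vert_collapse_vert Hu) Hux Hp).
by rewrite -Hp Hpx eqxx in Huv.
Qed.

Lemma valency_collapse u :
  u \in vert G' -> u != vi -> valency G' u = valency G u.
Proof.
move=> Hu Huv; apply: eq_card => x; rewrite !inE nbr_collapse Hu /=.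
by case Hn: (nbr G u x) => //=; rewrite (nbr_vert_collapse Hu Huv Hn).
Qed.

Lemma node_collapse u : node G' u = node G u && (u != vi).
Proof.
have [->|Huv] := eqVneq u vi; first by rewrite /node /= eqxx orbT /= !andbF.
rewrite andbT /node /= (negbTE Huv) orbF.
case Hu: (u \in vert G') => /=.
  by rewrite (valency_collapse Hu Huv) (vert_collapse_vert Hu).
case Hu0: (u \in vert G) => //=.
move: Hu; rewrite vert_collapse Hu0 /= => /negbFE /andP[/eqP Hp Hv].
by rewrite (child_valency1 Hu0 Hv Hp) eqxx andbF.
Qed.

Lemma onpath_collapse v w u : onpath G' v w u = onpath G v w u.
Proof. by []. Qed.

Definition wt_vi_off_path v w :=
  \prod_(x | nbr G vi x && ~~ onpath G v w x) wt G vi x.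

Lemma lk_collapse_split v w :
  lk G v w = (if onpath G v w vi then wt_vi_off_path v w else 1) * lk G' v w.
Proof.
have -> : lk G' v w = \prod_(u | node G u && onpath G v w u && (u != vi))
    \prod_(x | nbr G u x && ~~ onpath G v w x) wt G u x.
  apply: eq_big => [u|u]; first by rewrite node_collapse andbAC.
  case/andP => Hn' _; have Hu : u \in vert G' by case/and3P: Hn'.
  move: Hn'; rewrite node_collapse => /andP[Hn Huv].
  apply: eq_bigl => x; rewrite nbr_collapse Hu /=.
  by case Hx: (nbr G u x) => //=; rewrite (nbr_vert_collapse Hu Huv Hx).
rewrite /lk; case Ho: (onpath G v w vi); first by rewrite (bigD1 vi) /= ?Ho ?vi_node.
rewrite mul1r; apply: eq_bigl => u.
by have [->|] := eqVneq u vi; rewrite ?Ho ?andbF ?andbT.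
Qed.

Lemma lk_collapse a b : a \in vert G' -> a != vi -> b \in vert G' -> b != vi ->
  lk G a b = lk G' a b.
Proof.
move=> Ha Hav Hb Hbv; rewrite lk_collapse_split.
suff -> : onpath G a b vi = false by rewrite mul1r.
apply/negbTE; rewrite /onpath inE negb_and; apply/orP; left.
apply/negP => /orP[].
  by move/(ancP Gwf _ (vert_collapse_vert Ha)); apply: collapse_nancestor_vi.
by move/(ancP Gwf _ (vert_collapse_vert Hb)); apply: collapse_nancestor_vi.
Qed.

Lemma anc_Li u : (u \in anc G Li) = (u == Li) || (u \in anc G vi).
Proof.
apply/idP/idP.
  move/(ancP Gwf _ Li_vert) => [[|n] Hn]; first by rewrite -Hn eqxx.
  by apply/orP; right; apply/(ancP Gwf _ vi_vert); exists n; rewrite -Hn iterSr par_Li.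
case/orP => [/eqP ->|/(ancP Gwf _ vi_vert) [n Hn]]; apply/(ancP Gwf _ Li_vert).
  by exists 0%N.
by exists n.+1; rewrite iterSr par_Li.
Qed.

Section LinkingWithLi.
Variable b : T.
Hypotheses (b_vert : b \in vert G') (b_neq_vi : b != vi).

Let b_vertG : b \in vert G. Proof. exact: vert_collapse_vert. Qed.

Let b_nancestor_vi : ~ ancestor G b vi. Proof. exact: collapse_nancestor_vi. Qed.

Let b_nancestor_Li : ~ ancestor G b Li.
Proof. by move=> H; apply: b_nancestor_vi; apply: ancestor_trans H ancestor_Li_vi. Qed.

Let Li_nanc_b : (Li \in anc G b) = false.
Proof. by apply/negP => /(ancP Gwf _ b_vertG). Qed.

Let common_anc u :
  [exists x in anc G Li :&: anc G b, (x != u) && (u \in anc G x)] ->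
  exists2 x, ancestor G b x & [/\ x != u, ancestor G x u & x = Li \/ ancestor G vi x].
Proof.
case/existsP => x /andP[]; rewrite inE => /andP[HxL Hxb] /andP[Hxu Hux].
have Hbx := proj1 (ancP Gwf _ b_vertG) Hxb.
exists x => //; split=> //; first exact/(ancP Gwf _ (ancestor_vert Gwf b_vertG Hbx)).
by move: HxL; rewrite anc_Li => /orP[/eqP ->|/(ancP Gwf _ vi_vert)]; [left|right].
Qed.

Lemma onpath_Li_vi : onpath G Li b vi.
Proof.
apply/andP; split.
  by rewrite inE anc_Li; apply/orP; left; apply/orP; right; apply/(ancP Gwf _ vi_vert); exists 0%N.
apply/negP => /common_anc [x Hbx [_ Hxv _]].
exact: b_nancestor_vi (ancestor_trans Hbx Hxv).
Qed.

Lemma onpath_Li_par_vi : onpath G Li b p.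
Proof.
apply/andP; split.
  by rewrite inE anc_Li; apply/orP; left; apply/orP; right; apply/(ancP Gwf _ vi_vert); exists 1%N.
apply/negP => /common_anc [x Hbx [Hxp Hpx [HL|[[|n] Hn]]]].
- by apply: b_nancestor_Li; rewrite -HL.
- by apply: b_nancestor_vi; move: Hbx; rewrite -Hn.
- move/negP: Hxp; apply; apply/eqP; apply: (ancestor_antisym Gwf (par_vert Gwf vi_vert)) => //.
  by exists n; rewrite -Hn iterSr.
Qed.

Lemma onpath_Li_Li : onpath G Li b Li.
Proof.
apply/andP; split; first by rewrite inE anc_Li eqxx.
apply/negP => /common_anc [x Hbx [_ HxL _]].
exact: b_nancestor_Li (ancestor_trans Hbx HxL).
Qed.

Lemma onpath_Li_child x : x \in vert G -> x != vi -> par G x = vi -> x != Li ->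
  onpath G Li b x = false.
Proof.
move=> Hx Hxv Hpx HxL; apply/negbTE; rewrite /onpath negb_and; apply/orP; left.
have Hxvi : ancestor G x vi by exists 1%N.
rewrite inE anc_Li (negbTE HxL) /= negb_or; apply/andP; split.
  apply/negP => /(ancP Gwf _ vi_vert) Hvx.
  by move/negP: Hxv; apply; apply/eqP; apply: (ancestor_antisym Gwf vi_vert).
apply/negP => /(ancP Gwf _ b_vertG) Hbx.
exact: b_nancestor_vi (ancestor_trans Hbx Hxvi).
Qed.

(* off the geodesic from L_i, v_i only sees its leaves *)
Lemma wt_vi_off_path_Li : wt_vi_off_path Li b = beta G vi Li.
Proof.
apply: eq_bigl => x; case Hn: (nbr G vi x) => //=.
have [->|Hxp] := eqVneq x p; first by rewrite onpath_Li_par_vi.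
have Hpx : par G x = vi.
  by case/and4P: Hn => _ _ _ /orP[/eqP H|/eqP //]; rewrite H eqxx in Hxp.
have [->|HxL] := eqVneq x Li; first by rewrite onpath_Li_Li.
case/and4P: Hn => _ Hx Hvx _.
by rewrite onpath_Li_child // eq_sym.
Qed.

Lemma onpath_Li_onpath_vi u : u != Li -> onpath G Li b u = onpath G vi b u.
Proof.
move=> HuL; rewrite /onpath; have -> : anc G Li :&: anc G b = anc G vi :&: anc G b.
  apply/setP => x; rewrite !in_setI anc_Li.
  by have [->|] := eqVneq x Li; rewrite //= Li_nanc_b !andbF.
by rewrite in_setU anc_Li (negbTE HuL) in_setU.
Qed.

Lemma lk_collapse_Li_vi : lk G' Li b = lk G' vi b.
Proof.
apply: eq_big => [u|u _].
  have [->|HuL] := eqVneq u Li; last by rewrite !onpath_collapse onpath_Li_onpath_vi.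
  by rewrite /node /= Li_vert_collapse.
apply: eq_bigl => x; case Hn: (nbr G' u x) => //=.
have HxL : x != Li.
  by apply: contraTneq Hn => ->; rewrite nbr_collapse Li_vert_collapse !andbF.
by rewrite !onpath_collapse onpath_Li_onpath_vi.
Qed.

Lemma lk_Li : lk G Li b = beta G vi Li * lk G' vi b.
Proof.
by rewrite lk_collapse_split onpath_Li_vi wt_vi_off_path_Li lk_collapse_Li_vi.
Qed.

End LinkingWithLi.

Lemma arrowv_survives b :
  arrowv G b -> b != Li -> b \in vert G' /\ b != vi.
Proof.
case/andP=> Hb Ha HbL.
have Hbv : b != vi by apply: contraTneq Ha => ->; rewrite arrow_vi.
split => //; rewrite vert_collapse Hb /= Hbv andbT; apply/negP => /eqP Hp.
move/negP: HbL; apply; apply/eqP; apply: Li_uniq; first by rewrite /arrowv Hb.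
by rewrite /nbr vi_vert Hb eq_sym Hbv Hp eqxx orbT.
Qed.

Lemma arrowv_collapse j :
  arrowv G' j = (arrowv G j && (j != Li)) || (j == vi).
Proof.
have [->|Hjv] := eqVneq j vi; first by rewrite /arrowv vi_vert_collapse /= eqxx !orbT.
rewrite orbF; have [->|HjL] := eqVneq j Li; first by rewrite /arrowv Li_vert_collapse andbF.
rewrite /= andbT /arrowv /= (negbTE Hjv) orbF.
case Ha: (arrow G j); rewrite ?andbF ?andbT //.
apply/idP/idP; first exact: vert_collapse_vert.
move=> Hj; have Hj0 : arrowv G j by rewrite /arrowv Hj Ha.
by case: (arrowv_survives Hj0 HjL).
Qed.

Lemma sum_arrows_collapse (V : nmodType) (f : int -> V) v (Q : pred T) :
  v \in vert G' -> v != vi -> Q Li -> Q vi ->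
  \sum_(j | arrowv G j && Q j) f (mult G j * lk G v j) =
  \sum_(j | arrowv G' j && Q j) f (mult G' j * lk G' v j).
Proof.
move=> Hv Hvv QL Qv.
rewrite (bigD1 Li) /=; last by rewrite Li_arrow QL.
rewrite [RHS](bigD1 vi) /=; last by rewrite arrowv_collapse eqxx orbT Qv.
congr (_ + _).
  by rewrite eqxx lkC lk_Li // (lkC G' vi) mulrA (mulrC (mult G Li)).
apply: eq_big => j.
  rewrite arrowv_collapse; have [->|Hjv] := eqVneq j vi.
    by rewrite /arrowv arrow_vi !andbF.
  by rewrite orbF !andbT; case: (arrowv G j); case: (Q j); case: (j != Li).
case/andP => /andP[Ha _] HjL; case: (arrowv_survives Ha HjL) => Hj Hjv.
by rewrite (negbTE Hjv) lk_collapse.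
Qed.

Lemma sum_arrows_Li :
  \sum_(j | arrowv G j && (j != Li)) ((mult G j * lk G Li j)%:~R : rat) =
  (beta G vi Li)%:~R *
    \sum_(j | arrowv G' j && (j != vi)) ((mult G' j * lk G' vi j)%:~R : rat).
Proof.
rewrite mulr_sumr; apply: eq_big => j.
  rewrite arrowv_collapse; have [->|Hjv] := eqVneq j vi.
    by rewrite /arrowv arrow_vi !andbF.
  by rewrite orbF andbT.
case/andP => Ha HjL; case: (arrowv_survives Ha HjL) => Hj Hjv.
by rewrite /= (negbTE Hjv) lk_Li // [X in X%:~R = _]mulrCA [LHS]intrM.
Qed.

Definition collapse_label a := if a == Li then vi else a.
Definition collapse_scale a : rat := if a == Li then (beta G vi Li)%:~R else 1.

Lemma arrowv_collapse_label :
  [set a | arrowv G' a] = [set collapse_label a | a in [set a | arrowv G a]].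
Proof.
apply/setP => a; rewrite inE arrowv_collapse; apply/idP/imsetP.
  case/orP => [/andP[Ha HaL]|/eqP ->].
    by exists a; rewrite ?inE // /collapse_label (negbTE HaL).
  by exists Li; rewrite ?inE // /collapse_label eqxx.
case=> b; rewrite inE /collapse_label => Hb ->.
have [_|HbL] := eqVneq b Li; first by rewrite eqxx orbT.
by rewrite Hb HbL.
Qed.

Lemma lkm_collapse a b : arrowv G a -> arrowv G b ->
  lkm G a b = collapse_scale a * collapse_scale b *
              lkm G' (collapse_label a) (collapse_label b).
Proof.
move=> Ha Hb; rewrite /collapse_scale /collapse_label.
have [->|HaL] := eqVneq a Li; have [Eb|HbL] := eqVneq b Li.
- by rewrite Eb /lkm !eqxx /= sum_arrows_Li eqxx intrM div_scale_sqr.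
- have [Hb' Hbv] := arrowv_survives Hb HbL.
  by rewrite /lkm eq_sym HbL eq_sym Hbv /= mulr1 lk_Li // intrM.
- have [Ha' Hav] := arrowv_survives Ha HaL.
  by rewrite Eb /lkm HaL Hav /= mul1r lkC lk_Li // (lkC G' vi) intrM mulrC.
- have [Ha' Hav] := arrowv_survives Ha HaL; have [Hb' Hbv] := arrowv_survives Hb HbL.
  rewrite !mul1r /lkm; have [<-|Hab] := eqVneq a b; last by rewrite /= lk_collapse.
  rewrite /= (negbTE Hav).
  by rewrite (sum_arrows_collapse (fun x : int => (x%:~R : rat)) (Q := fun j => j != a))
    // eq_sym.
Qed.

Lemma Mv_collapse v : v \in vert G' -> v != vi -> Mv G v = Mv G' v.
Proof.
move=> Hv Hvv; rewrite /Mv.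
transitivity (\sum_(j | arrowv G j && predT j) mult G j * lk G v j).
  by apply: eq_bigl => j; rewrite andbT.
rewrite (sum_arrows_collapse id (Q := predT)) //.
by apply: eq_bigl => j; rewrite andbT.
Qed.

Lemma collapse_conditions :
  condA G -> condB G -> condC G -> [/\ condA G', condB G' & condC G'].
Proof.
move=> HA HB HC; split.
- move=> v; rewrite node_collapse => /andP[Hn _]; have [Hnear Hfar] := HA v Hn.
  by split=> // x; rewrite nbr_collapse => /and3P[Hx _ _]; apply: Hnear.
- by move=> v w; rewrite !node_collapse => /andP[Hv _] /andP[Hw _]; apply: HB.
- move=> v Hv; rewrite /vmult /=; have [->|Hvv] := eqVneq v vi.
    rewrite ?eqxx ?orbT; apply: mulr_gt0.
      by apply: prodr_gt0 => x /andP[/andP[Hn Hxp] _]; apply: (HA vi vi_node).1.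
    by move: (HC Li Li_vert); rewrite /vmult; case/andP: Li_arrow => _ ->.
  have Hv0 := vert_collapse_vert Hv; move: (HC v Hv0); rewrite /vmult ?orbF.
  by case: (arrow G v); rewrite // Mv_collapse.
Qed.

End Collapse.

Theorem lemma3p17 (T : finType) (G : diagram T) (vi Li : T) :
  wf G ->
  node G vi -> vi != droot G ->
  (forall w, node G w -> vi \in anc G w -> w = vi) ->
  arrowv G Li -> nbr G vi Li -> Li != par G vi ->
  (forall a, arrowv G a -> nbr G vi a -> a = Li) ->
  (forall x, nbr G vi x -> x != par G vi -> x != Li -> leaf G x) ->
  let G' := collapse G vi Li in
  let sigma := fun a : T => if a == Li then vi else a in
  let c := fun a : T => if a == Li then ((beta G vi Li)%:~R : rat) else 1 in
  [/\ [set a | arrowv G' a] = [set sigma a | a in [set a | arrowv G a]],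
      (forall a b, arrowv G a -> arrowv G b ->
         lkm G a b = c a * c b * lkm G' (sigma a) (sigma b)) &
      (condA G -> condB G -> condC G -> [/\ condA G', condB G' & condC G'])].
Proof.
(* "no node beyond v_i" already follows from the children of v_i being leaves *)
move=> Gwf vi_node vi_nroot _ Li_arrow vi_Li Li_npar Li_uniq vi_leaves G' sigma c.
split.
- exact: (arrowv_collapse_label vi_node Li_arrow vi_Li Li_npar Li_uniq).
- exact: (lkm_collapse Gwf vi_node vi_nroot Li_arrow vi_Li Li_npar Li_uniq vi_leaves).
- exact: (collapse_conditions Gwf vi_node vi_nroot Li_arrow vi_Li Li_npar Li_uniq vi_leaves).
Qed.
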